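(* Let $u,v\ge0$ be real numbers and let $\mu=\sum_{i,j\ge0}\sum_{\sigma\in\Delta}c_{\sigma,i,j}\sigma X^iY^j\in D^{(u,v)}(G_{p^\infty},F)$. Let $\omega_{\mathfrak p}\in\Omega_{\mathfrak p}$ and put $F'=F(\omega_{\mathfrak p}(\gamma_{\mathfrak p}))$. Then the distribution $\mu^{(\omega_{\mathfrak p})}$ lies in $D^{(v)}(G_{\overline{\mathfrak p}^\infty},F')$.
   Context: Let $K$ be an imaginary quadratic field in which the odd prime $p$ splits as $\mathfrak p\overline{\mathfrak p}$. For an ideal $\mathfrak I$ of $K$, $G_{\mathfrak I}$ is the ray class group of $K$ modulo $\mathfrak I$; $G_{p^\infty}=\varprojlim G_{p^n}$, $G_{\mathfrak p^\infty}=\varprojlim G_{\mathfrak p^n}$, $G_{\overline{\mathfrak p}^\infty}=\varprojlim G_{\overline{\mathfrak p}^n}$. Fix topological generators $\gamma_{\mathfrak p},\gamma_{\overline{\mathfrak p}}$ of the $\mathbb{Z}_p$-parts of $G_{\mathfrak p^\infty}$, $G_{\overline{\mathfrak p}^\infty}$, so $G_{p^\infty}\cong\Delta\times\langle\gamma_{\mathfrak p}\rangle\times\langle\gamma_{\overline{\mathfrak p}}\rangle$ with $\Delta$ finite abelian; $X=\gamma_{\mathfrak p}-1$, $Y=\gamma_{\overline{\mathfrak p}}-1$. $F$ is a finite extension of $\mathbb{Q}_p$ containing $\mu_{|\Delta|}$. For $u,v\ge0$, $D^{(u,v)}(G_{p^\infty},F)$ is the set of $\sum_{i,j\ge0}\sum_{\sigma\in\Delta}c_{\sigma,i,j}\sigma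 X^iY^j$ with $c_{\sigma,i,j}\in F$ and $\sup_{i,j}|c_{\sigma,i,j}|_p/(i^uj^v)<\infty$ for all $\sigma$ (powers of $0$ read as $1$). One-variable spaces $D^{(v)}(\cdot,F')$ are defined analogously with a single variable: series $\sum_j\sum_\sigma c_{\sigma,j}\sigma Y^j$ with $\sup_j|c_{\sigma,j}|_p/j^v<\infty$. For $\star\in\{\mathfrak p,\overline{\mathfrak p}\}$, $\Omega_\star$ is the set of characters of $G_{p^\infty}$ of conductor $\star^n$ for some $n\ge1$. For $\omega_{\mathfrak p}\in\Omega_{\mathfrak p}$, $\mu^{(\omega_{\mathfrak p})}$ denotes the one-variable distribution $\sum_{j\ge0}\sum_{\sigma\in\Delta}\big(\sum_{i\ge0}c_{\sigma,i,j}(\omega_{\mathfrak p}(\gamma_{\mathfrak p})-1)^i\big)\sigma Y^j$ (up to the root-of-unity factors $\omega_{\mathfrak p}(\sigma)$), characterised by $\mu^{(\omega_{\mathfrak p})}(\omega_{\overline{\mathfrak p}})=\mu(\omega_{\mathfrak p}\omega_{\overline{\mathfrak p}})$ for $\omega_{\overline{\mathfrak p}}\in\Omega_{\overline{\mathfrak p}}$. *)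

From HB Require Import structures.
From mathcomp Require Import all_boot all_order all_algebra.
From mathcomp Require Import all_classical all_reals all_analysis.
Set Implicit Arguments. Unset Strict Implicit. Unset Printing Implicit Defensive.
Import Order.TTheory GRing.Theory Num.Theory.
Local Open Scope ring_scope.

Definition is_nonarch_abs (R : realType) (L : fieldType) (abs : L -> R) : Prop :=
  [/\ forall x, 0 <= abs x,
      forall x, abs x = 0 <-> x = 0,
      forall x y, abs (x * y) = abs x * abs y
    & forall x y, abs (x + y) <= Num.max (abs x) (abs y)].

Definition abs_cvg (R : realType) (L : fieldType) (abs : L -> R)
  (s : nat -> L) (l : L) : Prop :=
  forall e : R, 0 < e -> exists N : nat, forall n, (N <= n)%N -> abs (l - s n) < e.

Definition abs_cauchy (R : realType) (L : fieldType) (abs : L -> R)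
  (s : nat -> L) : Prop :=
  forall e : R, 0 < e -> exists N : nat, forall m n, (N <= m)%N -> (N <= n)%N ->
    abs (s m - s n) < e.

Definition abs_complete (R : realType) (L : fieldType) (abs : L -> R) : Prop :=
  forall s : nat -> L, abs_cauchy abs s -> exists l, abs_cvg abs s l.

Definition abs_series_to (R : realType) (L : fieldType) (abs : L -> R)
  (a : nat -> L) (l : L) : Prop :=
  abs_cvg abs (fun n => \sum_(i < n) a i) l.

(* i^u with the convention 0^u = 1 ("powers of 0 read as 1") *)
Definition wpow (R : realType) (i : nat) (u : R) : R :=
  if i == 0%N then 1 else powR (i%:R) u.

(* Coefficient families of D^{(u,v)}(G_{p^infty}, L):
   sup_{i,j} |c_{sigma,i,j}| / (i^u j^v) < infinity for every sigma. *)
Definition in_D2 (R : realType) (L : fieldType) (abs : L -> R) (Delta : finType)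
  (u v : R) (c : Delta -> nat -> nat -> L) : Prop :=
  forall sigma, exists C : R, forall i j,
    abs (c sigma i j) <= C * (wpow i u * wpow j v).

(* One-variable coefficient families of D^{(v)}(., L). *)
Definition in_D1 (R : realType) (L : fieldType) (abs : L -> R) (Delta : finType)
  (v : R) (d : Delta -> nat -> L) : Prop :=
  forall sigma, exists C : R, forall j, abs (d sigma j) <= C * wpow j v.

From HB Require Import structures.
From mathcomp Require Import all_boot all_order all_algebra.
From mathcomp Require Import all_classical all_reals all_analysis.
From mathcomp Require Import ring lra.
Import Order.TTheory GRing.Theory Num.Theory.
Local Open Scope ring_scope.

(* Since [zeta] is a [p]-power root of unity and [|p| < 1], [r := |zeta - 1| < 1]:
   inductively [|zeta^p - 1| < 1], and [(1 + y)^p - 1 - y^p] has all its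
   coefficients divisible by [p].  Hence
   [|c_{sigma,i,j} (zeta - 1)^i| <= C j^v (i^u r^i)], where [i^u r^i] is bounded
   by some [K] and tends to [0].  In a complete non-archimedean field a series
   whose terms tend to [0] converges, and its sum is bounded by any bound on its
   terms, so the [j]-th coefficient of [mu^(omega)] has norm at most
   [|w sigma| C K j^v]. *)

Section NonarchAbs.
Set Implicit Arguments. Unset Strict Implicit.
Variables (R : realType) (L : fieldType) (abs : L -> R).
Hypothesis abs_na : is_nonarch_abs abs.

Lemma nabs_ge0 x : 0 <= abs x.
Proof. by case: abs_na. Qed.

Lemma nabs0 : abs 0 = 0.
Proof. by case: abs_na => _ abs_eq0 _ _; apply/abs_eq0. Qed.

Lemma nabsM x y : abs (x * y) = abs x * abs y.
Proof. by case: abs_na. Qed.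

Lemma nabs1 : abs 1 = 1.
Proof.
have abs1_neq0 : abs 1 != 0.
  by case: abs_na => _ abs_eq0 _ _; apply/eqP => /abs_eq0/eqP; rewrite oner_eq0.
have := nabsM 1 1; rewrite mulr1 => abs1_sqr.
by apply: (mulIf abs1_neq0); rewrite mul1r -abs1_sqr.
Qed.

Lemma nabsX x k : abs (x ^+ k) = abs x ^+ k.
Proof. by elim: k => [|k IH]; rewrite ?nabs1 // !exprS nabsM IH. Qed.

Lemma nabsN1 : abs (-1) = 1.
Proof.
apply/eqP; rewrite -(@pexpr_eq1 _ _ 2) ?nabs_ge0 //.
by rewrite -nabsX sqrrN expr1n nabs1.
Qed.

Lemma nabsN x : abs (- x) = abs x.
Proof. by rewrite -mulN1r nabsM nabsN1 mul1r. Qed.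

Lemma nabs_distC x y : abs (x - y) = abs (y - x).
Proof. by rewrite -nabsN opprB. Qed.

Lemma nabsD_le x y (B : R) : abs x <= B -> abs y <= B -> abs (x + y) <= B.
Proof.
case: abs_na => _ _ _ ultra xB yB.
by apply: le_trans (ultra x y) _; rewrite ge_max xB yB.
Qed.

Lemma nabs_sum_le (I : Type) (r : seq I) (P : pred I) (F : I -> L) (B : R) :
  0 <= B -> (forall i, P i -> abs (F i) <= B) -> abs (\sum_(i <- r | P i) F i) <= B.
Proof.
move=> B_ge0 FB; apply: (big_ind (fun x => abs x <= B)) => //.
  by rewrite nabs0.
by move=> x y; apply: nabsD_le.
Qed.

Lemma nabs_natr_le1 k : abs (k%:R : L) <= 1.
Proof.
by elim: k => [|k IH]; rewrite ?nabs0 // -addn1 natrD; apply: nabsD_le; rewrite ?nabs1.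
Qed.

Lemma nabs_root1 (z : L) k : (0 < k)%N -> z ^+ k = 1 -> abs z = 1.
Proof.
move=> k_gt0 zk1; apply/eqP; rewrite -(pexpr_eq1 k_gt0) ?nabs_ge0 //.
by rewrite -nabsX zk1 nabs1.
Qed.

Lemma nabs_expr1D_subr p (y : L) : prime p -> abs y <= 1 ->
  abs ((1 + y) ^+ p - 1 - y ^+ p) <= abs (p%:R : L).
Proof.
case: p => [|[|q]] // p_prime y_le1.
rewrite exprDn big_ord_recr big_ord_recl /= subn0 subnn bin0 binn.
rewrite !expr0 !expr1n !mulr1 !mul1r !mulr1n.
set S := \sum_(i < q.+1) _.
have -> : 1 + S + y ^+ q.+2 - 1 - y ^+ q.+2 = S by ring.
apply: nabs_sum_le => [|i _]; first exact: nabs_ge0.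
have /dvdnP[m ->] : (q.+2 %| 'C(q.+2, bump 0 i))%N.
  by apply: prime_dvd_bin => //; rewrite /bump /= add1n ltnS (leq_trans (ltn_ord i)).
rewrite expr1n mul1r -mulr_natr natrM !nabsM nabsX mulrA.
have yk_ge0 := exprn_ge0 (bump 0 i) (nabs_ge0 y).
apply: ler_piMl; rewrite ?nabs_ge0 // mulr_ile1 ?nabs_ge0 ?nabs_natr_le1 //.
exact: exprn_ile1 (nabs_ge0 _) y_le1.
Qed.

Lemma nabs_prime_root_subr1_lt1 p n (z : L) : prime p -> abs (p%:R : L) < 1 ->
  z ^+ (p ^ n) = 1 -> abs (z - 1) < 1.
Proof.
move=> p_prime p_small; have p_gt0 := prime_gt0 p_prime.
elim: n z => [|n IH] z; first by rewrite expn0 expr1 => ->; rewrite subrr nabs0.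
rewrite expnS exprM => zp1.
have zp_small := IH _ zp1.
set y := z - 1.
have z_unit : abs z = 1.
  by apply: (@nabs_root1 z (p * p ^ n)%N); rewrite ?muln_gt0 ?expn_gt0 ?p_gt0 // exprM.
have y_le1 : abs y <= 1 by apply: nabsD_le; rewrite ?nabsN ?nabs1 ?z_unit.
have z_eq : z = 1 + y by rewrite addrC subrK.
have yp_eq : y ^+ p = (z ^+ p - 1) - ((1 + y) ^+ p - 1 - y ^+ p).
  by rewrite -z_eq opprB addrC addrNK.
rewrite -(expr_lt1 p_gt0) ?nabs_ge0 // -nabsX yp_eq.
case: abs_na => _ _ _ ultra; apply: le_lt_trans (ultra _ _) _.
rewrite gt_max zp_small nabsN /=.
apply: le_lt_trans p_small; exact: nabs_expr1D_subr.
Qed.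

End NonarchAbs.

Section PolynomialTimesGeometric.
Set Implicit Arguments. Unset Strict Implicit.
Variable R : realType.

Lemma bernoulli_ineq (t : R) i : 0 <= t -> 1 + i%:R * t <= (1 + t) ^+ i.
Proof.
move=> t_ge0; elim: i => [|i IH]; first by rewrite mul0r addr0 expr0.
have it_ge0 : 0 <= i%:R * t by apply: mulr_ge0.
rewrite exprS -addn1 natrD; nra.
Qed.

Lemma natr_mul_expr_le (rho : R) i : 0 < rho -> rho < 1 ->
  i%:R * rho ^+ i <= (rho^-1 - 1)^-1.
Proof.
move=> rho_gt0 rho_lt1; set t := rho^-1 - 1.
have t_gt0 : 0 < t by rewrite subr_gt0 invf_gt1.
have rhoi_gt0 : 0 < rho ^+ i by apply: exprn_gt0.
have rhoV_pow : (1 + t) ^+ i * rho ^+ i = 1 by rewrite addrC subrK exprVn mulVf ?gt_eqF.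
(* [(1 + t)^i = rho^-i], so Bernoulli's inequality gives [i t rho^i <= 1]. *)
rewrite -[t^-1]mul1r ler_pdivlMr // -[leRHS]rhoV_pow mulrAC ler_wpM2r ?(ltW rhoi_gt0) //.
by apply: le_trans _ (bernoulli_ineq i (ltW t_gt0)); rewrite lerDr.
Qed.

Lemma wpow_ge0 i (u : R) : 0 <= wpow i u.
Proof. by rewrite /wpow; case: ifP => // _; apply: powR_ge0. Qed.

Lemma wpow_expr_bounded (u r : R) : 0 <= u -> 0 <= r -> r < 1 ->
  exists K, forall i, wpow i u * r ^+ i <= K.
Proof.
move=> u_ge0 r_ge0 r_lt1.
have [->|u_neq0] := eqVneq u 0.
  have ri_le1 i : r ^+ i <= 1 by apply: exprn_ile1 => //; apply: ltW.
  by exists 1 => i; rewrite /wpow; case: ifP => _; rewrite ?powRr0 mul1r ri_le1.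
have u_gt0 : 0 < u by rewrite lt_neqAle eq_sym u_neq0.
(* With [rho^u = r'] for some [r' in ]r, 1[], [i^u r^i <= (i rho^i)^u]. *)
set r' := (1 + r) / 2.
have r'_gt0 : 0 < r' by rewrite /r'; lra.
set rho := r' `^ u^-1.
have rho_gt0 : 0 < rho by apply: powR_gt0.
have rho_u : rho `^ u = r' by rewrite -powRrM mulVf // powRr1 // ltW.
have rhoX_u i : (rho ^+ i) `^ u = r' ^+ i.
  by rewrite -powR_mulrn ?ltW // -powRrM mulrC powRrM rho_u powR_mulrn // ltW.
have rho_lt1 : rho < 1.
  rewrite ltNge; apply/negP => /(ge0_ler_powR (ltW u_gt0)).
  by rewrite !nnegrE ler01 powR_ge0 powR1 (rhoX_u 1) expr1 /r' => /(_ isT isT); lra.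
exists (Num.max 1 ((rho^-1 - 1)^-1 `^ u)) => -[|i].
  by rewrite /wpow /= mul1r expr0 le_max lexx.
rewrite /wpow /= le_max; apply/orP; right.
apply: (@le_trans _ _ ((i.+1)%:R `^ u * r' ^+ i.+1)).
  by apply: ler_wpM2l; rewrite ?powR_ge0 // lerXn2r ?nnegrE /r'; lra.
rewrite -rhoX_u -powRM //; last by rewrite exprn_ge0 // ltW.
apply: (ge0_ler_powR (ltW u_gt0)); rewrite ?nnegrE ?natr_mul_expr_le //.
  by rewrite mulr_ge0 // exprn_ge0 // ltW.
by rewrite invr_ge0 subr_ge0 invf_ge1 // ltW.
Qed.

Lemma wpow_expr_small (u r : R) : 0 <= u -> 0 <= r -> r < 1 ->
  forall e, 0 < e -> exists N, forall i, (N <= i)%N -> wpow i u * r ^+ i < e.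
Proof.
move=> u_ge0 r_ge0 r_lt1 e e_gt0.
(* Boundedness for the exponent [u + 1] gives [i^u r^i <= K / i]. *)
have [K HK] := wpow_expr_bounded (addr_ge0 u_ge0 ler01) r_ge0 r_lt1.
have K_ge0 : 0 <= K by have := HK 0%N; rewrite /wpow /= mul1r expr0; apply: le_trans.
have Ke_ge0 : 0 <= K / e by rewrite divr_ge0 // ltW.
exists (Num.Def.archi_bound (K / e)).+1 => -[//|i] N_le_i.
have K_lt : K < i.+1%:R * e.
  rewrite -ltr_pdivrMr //; apply: lt_le_trans (archi_boundP Ke_ge0) _.
  by rewrite ler_nat ltnW.
have wpowD1 : wpow i.+1 (u + 1) = i.+1%:R * wpow i.+1 u.
  by rewrite /wpow /= powRD ?pnatr_eq0 ?implybT // powRr1 // mulrC.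
have := HK i.+1; rewrite wpowD1 -mulrA => iK.
by rewrite -(ltr_pM2l (ltr0Sn _ i)); apply: le_lt_trans K_lt.
Qed.

End PolynomialTimesGeometric.

Section NonarchSeries.
Set Implicit Arguments. Unset Strict Implicit.
Variables (R : realType) (L : fieldType) (abs : L -> R).
Hypothesis abs_na : is_nonarch_abs abs.

Lemma abs_cvg_le (s : nat -> L) l (B : R) :
  abs_cvg abs s l -> (forall n, abs (s n) <= B) -> abs l <= B.
Proof.
move=> s_cvg sB; rewrite leNgt; apply/negP => B_lt.
have [N sN_near] : exists N, forall n, (N <= n)%N -> abs (l - s n) < abs l - B.
  by apply: s_cvg; rewrite subr_gt0.
case: abs_na => _ _ _ ultra; have := ultra (l - s N) (s N).
rewrite subrK leNgt gt_max => /negP; apply; apply/andP; split.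
  have B_ge0 : 0 <= B := le_trans (nabs_ge0 abs_na _) (sB 0%N).
  by apply: lt_le_trans (sN_near N (leqnn N)) _; rewrite lerBlDr lerDl.
exact: le_lt_trans (sB N) B_lt.
Qed.

Lemma abs_cauchy_series (a : nat -> L) :
  abs_cvg abs a 0 -> abs_cauchy abs (fun n => \sum_(i < n) a i).
Proof.
move=> a_cvg0 e e_gt0; have [N aN_small] := a_cvg0 (e / 2) (divr_gt0 e_gt0 (ltr0Sn _ 1)).
exists N => m n; wlog n_le_m : m n / (n <= m)%N => [Hwlog|N_le_m N_le_n].
  case: (leqP n m) => [/Hwlog //|/ltnW m_le_n N_le_m N_le_n].
  by rewrite nabs_distC //; apply: Hwlog.
rewrite -!(big_mkord xpredT) (big_cat_nat (leq0n n) n_le_m) /= addrAC subrr add0r.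
have e2_lt_e : e / 2 < e by rewrite ltr_pdivrMr // ltr_pMr // ltr1n.
apply: le_lt_trans e2_lt_e; rewrite big_nat_cond.
apply: (nabs_sum_le abs_na) => [|i /andP[/andP[n_le_i _] _]].
  by rewrite divr_ge0 // ltW.
rewrite -(nabsN abs_na) -[- a i]add0r ltW // aN_small //.
exact: leq_trans N_le_n n_le_i.
Qed.

Hypothesis abs_compl : abs_complete abs.

Lemma abs_series_exists_le (a : nat -> L) (B : R) : 0 <= B ->
  abs_cvg abs a 0 -> (forall i, abs (a i) <= B) ->
  exists s, abs_series_to abs a s /\ abs s <= B.
Proof.
move=> B_ge0 a_cvg0 aB; have [s s_lim] := abs_compl (abs_cauchy_series a_cvg0).
by exists s; split=> //; apply: abs_cvg_le s_lim _ => n; apply: nabs_sum_le.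
Qed.

Lemma partial_eval_series_bounded (u v : R) (c : nat -> nat -> L) (x : L) (C : R) :
  0 <= u -> abs x < 1 -> (forall i j, abs (c i j) <= C * (wpow i u * wpow j v)) ->
  exists f : nat -> L,
    (forall j, abs_series_to abs (fun i => c i j * x ^+ i) (f j))
    /\ exists C', forall j, abs (f j) <= C' * wpow j v.
Proof.
move=> u_ge0 x_small cC; set r := abs x; have r_ge0 : 0 <= r := nabs_ge0 abs_na x.
set g := fun i => wpow i u * r ^+ i.
have g_ge0 i : 0 <= g i by rewrite mulr_ge0 ?wpow_ge0 ?exprn_ge0.
have [K gK] := wpow_expr_bounded u_ge0 r_ge0 x_small.
suff series_j j : exists s, abs_series_to abs (fun i => c i j * x ^+ i) s
    /\ abs s <= C * K * wpow j v.
  have [f Hf] := choice series_j.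
  by exists f; split=> [j|]; [case: (Hf j) | exists (C * K) => j; case: (Hf j)].
set A := C * wpow j v.
have A_ge0 : 0 <= A.
  have := cC 0%N j; rewrite /wpow eqxx mul1r -/(wpow j v).
  exact: le_trans (nabs_ge0 abs_na _).
have term_le i : abs (c i j * x ^+ i) <= A * g i.
  have -> : A * g i = C * (wpow i u * wpow j v) * r ^+ i by rewrite /A /g; ring.
  by rewrite (nabsM abs_na) (nabsX abs_na) ler_wpM2r ?exprn_ge0.
have terms_cvg0 : abs_cvg abs (fun i => c i j * x ^+ i) 0.
  move=> e e_gt0; have A1_gt0 : 0 < A + 1 by rewrite ltr_wpDl.
  have [N gN_small] := wpow_expr_small u_ge0 r_ge0 x_small (divr_gt0 e_gt0 A1_gt0).
  exists N => i N_le_i; rewrite add0r (nabsN abs_na); apply: le_lt_trans (term_le i) _.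
  have Ag_le : A * g i <= (A + 1) * g i by rewrite ler_wpM2r // lerDl.
  by apply: le_lt_trans Ag_le _; rewrite mulrC -ltr_pdivlMr // gN_small.
have AK_ge0 : 0 <= A * K by rewrite mulr_ge0 // (le_trans (g_ge0 0%N) (gK 0%N)).
have [s [s_lim s_le]] := abs_series_exists_le AK_ge0 terms_cvg0
  (fun i => le_trans (term_le i) (ler_wpM2l A_ge0 (gK i))).
by exists s; split=> //; rewrite mulrAC.
Qed.

End NonarchSeries.

Theorem lemma2p1 (R : realType) (L : fieldType) (abs : L -> R) (p : nat)
  (Delta : finType) (u v : R) (c : Delta -> nat -> nat -> L)
  (zeta : L) (n : nat) (w : Delta -> L) :
  prime p -> (2 < p)%N ->
  is_nonarch_abs abs -> abs_complete abs -> abs (p%:R) < 1 ->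
  0 <= u -> 0 <= v ->
  in_D2 abs u v c ->
  zeta ^+ (p ^ n) = 1 ->
  (forall sigma, w sigma ^+ #|Delta| = 1) ->
  exists d : Delta -> nat -> L,
    (forall sigma j,
       exists s : L,
         abs_series_to abs (fun i => c sigma i j * (zeta - 1) ^+ i) s
         /\ d sigma j = w sigma * s)
    /\ in_D1 abs v d.
Proof.
move=> p_prime _ abs_na abs_compl p_small u_ge0 _ c_in_D2 zeta_root _.
have zeta_near1 := nabs_prime_root_subr1_lt1 abs_na p_prime p_small zeta_root.
have series_sigma sigma : exists f : nat -> L,
    (forall j, abs_series_to abs (fun i => c sigma i j * (zeta - 1) ^+ i) (f j))
    /\ exists C', forall j, abs (f j) <= C' * wpow j v.
  have [C cC] := c_in_D2 sigma.
  exact: (partial_eval_series_bounded abs_na abs_compl u_ge0 zeta_near1 cC).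
have [F F_spec] := choice series_sigma.
exists (fun sigma j => w sigma * F sigma j); split=> [sigma j | sigma].
  by exists (F sigma j); split=> //; case: (F_spec sigma).
have [_ [C' FC']] := F_spec sigma; exists (abs (w sigma) * C') => j.
by rewrite (nabsM abs_na) -mulrA ler_wpM2l ?(nabs_ge0 abs_na).
Qed.
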